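(* Let $\sigma$ be an erasing $k$-block substitution with $w_\epsilon\ne1^k$ that satisfies the optimality condition. Then there exists a Lebesgue-measurable set $\Gamma\subset\mathbb I$ (in fact of Lebesgue measure $0$) such that $f_\sigma(\Gamma)$ is not Lebesgue measurable.
   Context: Notation: $\mathbb I=[0,1]$. $\{0,1\}^*$ and $\{0,1\}^\omega$ denote finite and infinite binary words, and $\epsilon$ is the empty word. For a word $w$, set $0.w=\sum_iw_i2^{-i}$. For $x\in(0,1]$, $\widetilde x$ is the unique infinite binary expansion of $x$ not ending in $0^\infty$. Fix $k\ge2$. An erasing $k$-block substitution is a map $\sigma:\{0,1\}^k\to\{0,1\}^*$ with exactly one block $w_\epsilon$ such that $\sigma(w_\epsilon)=\epsilon$. It acts blockwise on infinite words, concatenating the images of consecutive $k$-blocks. The map $f_\sigma:\mathbb I\to\mathbb I$ is defined by $f_\sigma(x)=0.\sigma(\widetilde x)$ if $x\in(0,1]$ and $\widetilde x\neq w_\epsilon^\infty$, and $f_\sigma(x)=0$ otherwise. Optimality condition: every $w\in\{0,1\}^\omega$ can be written as $w=\prod_{i\ge1}\sigma(b_i)$ with blocks $b_i\in\{0,1\}^k$ satisfying $\sigma(b_i)\ne\epsilon$. *)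

From HB Require Import structures.
From mathcomp Require Import all_boot all_order all_algebra.
From mathcomp Require Import all_classical all_reals all_analysis.
Set Implicit Arguments.
Unset Strict Implicit.
Unset Printing Implicit Defensive.
Import Order.TTheory GRing.Theory Num.Theory.
Import numFieldNormedType.Exports.
Local Open Scope classical_set_scope.
Local Open Scope ring_scope.

(* Infinite binary words w = w_1 w_2 ... are functions nat -> bool,
   with the letter w_{i+1} stored at index i. Finite words are seq bool. *)

Definition fin_val (R : realType) (s : seq bool) : R :=
  \sum_(i < size s) (nth false s i)%:R / 2 ^+ i.+1.

Definition inf_val (R : realType) (w : nat -> bool) : R :=
  limn (series (fun i => (w i)%:R / 2 ^+ i.+1 : R)).

Definition not_ending_in_zeros (w : nat -> bool) : Prop :=
  forall n, exists m, (n <= m)%N /\ w m = true.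

(* x~ : the unique infinite binary expansion of x (for x in (0,1])
   not ending in 0^infinity (chosen by the choice operator [get]). *)
Definition tilde (R : realType) (x : R) : nat -> bool :=
  get (fun w : nat -> bool => inf_val R w = x /\ not_ending_in_zeros w).

Definition block (k : nat) (w : nat -> bool) (i : nat) : k.-tuple bool :=
  [tuple w (i * k + j)%N | j < k].

Definition sub_prefix (k : nat) (sigma : k.-tuple bool -> seq bool)
  (w : nat -> bool) (n : nat) : seq bool :=
  flatten [seq sigma (block k w i) | i <- iota 0 n].

(* 0.sigma(w): the value of the (finite or infinite) word
   sigma(w) = prod_i sigma(b_i), i.e. the limit of the values of its prefixes
   sigma(b_1)...sigma(b_n). *)
Definition sub_val (R : realType) (k : nat) (sigma : k.-tuple bool -> seq bool)
  (w : nat -> bool) : R :=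
  limn (fun n => fin_val R (sub_prefix sigma w n) : R).

Definition erasing_with (k : nat) (sigma : k.-tuple bool -> seq bool)
  (weps : k.-tuple bool) : Prop :=
  forall b, sigma b = [::] <-> b = weps.

(* w = weps^infinity  (k >= 1 assumed where used) *)
Definition is_power_of (k : nat) (weps : k.-tuple bool) (w : nat -> bool) : Prop :=
  forall n, w n = nth false weps (n %% k).

Definition f_sigma (R : realType) (k : nat) (sigma : k.-tuple bool -> seq bool)
  (weps : k.-tuple bool) (x : R) : R :=
  if `[< 0 < x <= 1 /\ ~ is_power_of weps (tilde x) >]
  then sub_val R sigma (tilde x) else 0.

Definition optimal (k : nat) (sigma : k.-tuple bool -> seq bool) : Prop :=
  forall w : nat -> bool, exists b : nat -> k.-tuple bool,
    (forall i, sigma (b i) <> [::]) /\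
    (forall n, let p := flatten [seq sigma (b i) | i <- iota 0 n] in
               p = [seq w j | j <- iota 0 (size p)]).

(* Lebesgue measurability = measurability for the completed Lebesgue measure *)
Definition lebesgue_measurable (R : realType) (A : set R) : Prop :=
  @measurable _ (caratheodory_type ((@wlength R idfun)^*)%mu) A.

(* Let V be a Vitali set in (0,1] (one representative per class of R/Q); it is
   not Lebesgue measurable.  For y in V, optimality of sigma writes the binary
   expansion of y as sigma(b_0) sigma(b_1) ... with every sigma(b_i) non-empty.
   Interleaving the erased block gives the word u = b_0 weps b_1 weps ..., which
   is not weps^oo and satisfies sigma(u) = y~, hence f_sigma(0.u) = y.  All these
   points 0.u lie in the set N of values of words whose odd-numbered k-blocks
   equal weps.  N is covered by 2^k copies of itself scaled by 2^-2k, so its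
   outer measure is 0.  Hence Gamma = {0.u | y in V} is a Lebesgue null set, in
   particular measurable, while f_sigma(Gamma) = V is not.

   The construction only needs k > 0. *)

From HB Require Import structures.
From mathcomp Require Import all_boot all_order all_algebra.
From mathcomp Require Import all_classical all_reals all_analysis.
From mathcomp Require Import ring lra zify.
Import Order.TTheory GRing.Theory Num.Theory.
Import numFieldNormedType.Exports.
Local Open Scope classical_set_scope.
Local Open Scope ring_scope.
Set Implicit Arguments.
Unset Strict Implicit.
Unset Printing Implicit Defensive.

Section BinaryValue.
Variable R : realType.

Definition bin_term (w : nat -> bool) (i : nat) : R := (w i)%:R / 2 ^+ i.+1.

Definition wshift (m : nat) (w : nat -> bool) : nat -> bool := fun i => w (i + m)%N.

Lemma series0 (u : nat -> R) : series u 0 = 0.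
Proof. by rewrite /series /= big_geq. Qed.

Lemma inv_pow2_small (e : R) : 0 < e -> exists n, (2 ^+ n)^-1 < e.
Proof.
move=> e0; have [n hn] : exists n : nat, e^-1 < n%:R.
  by exists (Num.bound (e^-1)); apply: archi_boundP; rewrite invr_ge0 ltW.
exists n; rewrite -(invrK e) ltf_pV2 ?posrE ?exprn_gt0 ?invr_gt0 //.
by apply: (lt_le_trans hn); rewrite -natrX ler_nat; exact/ltnW/ltn_expl.
Qed.

Lemma inv_pow2_le (m n : nat) : (m <= n)%N -> (2 ^+ n)^-1 <= (2 ^+ m)^-1 :> R.
Proof. by move=> mn; rewrite lef_pV2 ?posrE ?exprn_gt0 // ler_eXn2l ?ltr1n. Qed.

Lemma bin_term_ge0 w i : 0 <= bin_term w i.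
Proof. by rewrite /bin_term divr_ge0 // exprn_ge0. Qed.

Lemma bin_term_le w i : bin_term w i <= (2 ^+ i.+1)^-1.
Proof. by rewrite /bin_term ler_pdivrMr ?exprn_gt0// mulVf ?expf_neq0//; case: (w i). Qed.

Lemma bin_partial_le w n : series (bin_term w) n <= 1 - (2 ^+ n)^-1.
Proof.
elim: n => [|n IH]; first by rewrite series0 expr0 invr1 subrr.
rewrite seriesSr; apply: (le_trans (lerD IH (bin_term_le w n))).
rewrite -addrA lerD2l exprS invfM.
have : 0 < (2 ^+ n)^-1 :> R by rewrite invr_gt0 exprn_gt0.
lra.
Qed.

Lemma bin_partial_nd w : nondecreasing_seq (series (bin_term w)).
Proof. by apply/nondecreasing_seqP => n; rewrite seriesSr lerDl bin_term_ge0. Qed.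

Lemma bin_partial_le1 w n : series (bin_term w) n <= 1.
Proof.
apply: (le_trans (bin_partial_le w n)).
by rewrite lerBlDr lerDl invr_ge0 exprn_ge0.
Qed.

Lemma bin_partial_cvg w : cvgn (series (bin_term w)).
Proof.
apply: (nondecreasing_is_cvgn (bin_partial_nd w)).
by exists 1 => _ [n _ <-]; exact: bin_partial_le1.
Qed.

Lemma bin_partial_ext (u v : nat -> bool) n :
  (forall i, (i < n)%N -> u i = v i) ->
  series (bin_term u) n = series (bin_term v) n.
Proof.
by move=> h; apply: eq_big_nat => i /andP [_ hi]; rewrite /bin_term h.
Qed.

Lemma inf_val_ge_partial w n : series (bin_term w) n <= inf_val R w.
Proof.
by apply: nondecreasing_cvgn_le; [exact: bin_partial_nd | exact: bin_partial_cvg].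
Qed.

Lemma inf_val_le1 w : inf_val R w <= 1.
Proof.
apply: limr_le; first exact: bin_partial_cvg.
by near=> n; exact: bin_partial_le1.
Unshelve. all: by end_near.
Qed.

Lemma inf_val_ge0 w : 0 <= inf_val R w.
Proof. by apply: le_trans (inf_val_ge_partial w 0); rewrite series0. Qed.

Lemma inf_val_head w : inf_val R w = bin_term w 0 + inf_val R (wshift 1 w) / 2.
Proof.
have htail : (fun n => series (bin_term w) n.+1) =
    (fun n => bin_term w 0 + series (bin_term (wshift 1 w)) n / 2).
  apply/funext => n; rewrite /series /= big_nat_recl //; congr (_ + _).
  rewrite big_distrl /=; apply: eq_bigr => i _.
  rewrite /bin_term /wshift addn1 exprS invfM; field; rewrite expf_neq0 // pnatr_eq0.
have hcvg : (fun n => series (bin_term w) n.+1) @ \oo -->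
    bin_term w 0 + inf_val R (wshift 1 w) / 2.
  by rewrite htail; apply: cvgD; [exact: cvg_cst | apply: cvgM; [exact: bin_partial_cvg | exact: cvg_cst]].
by move: hcvg; rewrite cvg_shiftS => hcvg; rewrite /inf_val (cvg_lim _ hcvg).
Qed.

Lemma wshiftS m w : wshift 1 (wshift m w) = wshift m.+1 w.
Proof. by apply/funext => i; rewrite /wshift -addnA add1n addnS. Qed.

Lemma inf_val_split w m :
  inf_val R w = series (bin_term w) m + inf_val R (wshift m w) / 2 ^+ m.
Proof.
elim: m => [|m IH].
  by rewrite series0 expr0 divr1 add0r; congr inf_val; apply/funext => i; rewrite /wshift addn0.
rewrite IH (inf_val_head (wshift m w)) wshiftS seriesSr /bin_term /wshift add0n expr1 exprS.
by field; rewrite expf_neq0 // pnatr_eq0.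
Qed.

Lemma inf_val_cvg_along w (L : nat -> nat) :
  (forall p, exists N, forall n, (N <= n)%N -> (p <= L n)%N) ->
  (fun n => series (bin_term w) (L n)) @ \oo --> inf_val R w.
Proof.
move=> hL; apply/cvgrPdist_le => e e0.
have [p hp] := inv_pow2_small e0; have [N hN] := hL p.
near=> n; have hpL : (p <= L n)%N by apply: hN; near: n; exact: nbhs_infty_ge.
have hd : inf_val R w - series (bin_term w) (L n) =
    inf_val R (wshift (L n) w) * (2 ^+ L n)^-1 by rewrite [in LHS](inf_val_split w (L n)); ring.
have h0 := inf_val_ge0 (wshift (L n) w); have h1 := inf_val_le1 (wshift (L n) w).
have h2 := inv_pow2_le hpL; have h3 : 0 < (2 ^+ L n)^-1 :> R by rewrite invr_gt0 exprn_gt0.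
rewrite hd ger0_norm; last by rewrite mulr_ge0 // ltW.
nra.
Unshelve. all: by end_near.
Qed.

Lemma not_ending_in_zeros_shift w m :
  not_ending_in_zeros w -> not_ending_in_zeros (wshift m w).
Proof.
move=> h n; have [j [hj wj]] := h (n + m)%N.
by exists (j - m)%N; split; [lia | rewrite /wshift subnK //; lia].
Qed.

Lemma inf_val_gt0 w : not_ending_in_zeros w -> 0 < inf_val R w.
Proof.
move=> /(_ 0%N) [n [_ wn]]; apply: lt_le_trans (inf_val_ge_partial w n.+1).
have := bin_partial_nd w (leq0n n); rewrite series0 seriesSr => h.
have : 0 < bin_term w n by rewrite /bin_term wn mul1r invr_gt0 exprn_gt0.
lra.
Qed.

Lemma inf_val_head_inj u v : not_ending_in_zeros u -> not_ending_in_zeros v ->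
  inf_val R u = inf_val R v -> u 0%N = v 0%N.
Proof.
have lt01 u' v' : not_ending_in_zeros v' -> u' 0%N = false -> v' 0%N = true ->
    inf_val R u' < inf_val R v'.
  move=> hv u0 v0; rewrite (inf_val_head u') (inf_val_head v') /bin_term u0 v0 /=.
  have := inf_val_le1 (wshift 1 u'); have := inf_val_gt0 (not_ending_in_zeros_shift 1 hv).
  lra.
move=> hu hv e; case hu0: (u 0%N); case hv0: (v 0%N) => //.
  by have := lt01 v u hu hv0 hu0; rewrite e ltxx.
by have := lt01 u v hv hu0 hv0; rewrite e ltxx.
Qed.

Lemma inf_val_inj u v : not_ending_in_zeros u -> not_ending_in_zeros v ->
  inf_val R u = inf_val R v -> u = v.
Proof.
move=> hu hv e; apply/funext => n; elim: n u v hu hv e => [|n IH] u v hu hv e.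
  exact: inf_val_head_inj.
have h0 := inf_val_head_inj hu hv e.
have e' : inf_val R (wshift 1 u) = inf_val R (wshift 1 v).
  by move: e; rewrite (inf_val_head u) (inf_val_head v) /bin_term h0 => e; lra.
by have := IH _ _ (not_ending_in_zeros_shift 1 hu) (not_ending_in_zeros_shift 1 hv) e';
  rewrite /wshift addn1.
Qed.

Lemma fin_val_prefix w L : fin_val R [seq w j | j <- iota 0 L] = series (bin_term w) L.
Proof.
rewrite /fin_val size_map size_iota /series /= big_mkord; apply: eq_bigr => i _.
by rewrite /bin_term (nth_map 0%N) ?size_iota // nth_iota.
Qed.

End BinaryValue.

Section BinaryExpansion.
Variable R : realType.

(* Greedy binary expansion of y in (0,1]: remainder after n digits, where the
   digit n+1 is 1 exactly when the remainder exceeds 2^-(n+1).  Choosing strict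
   inequality makes the expansion avoid the tail 0^oo. *)
Fixpoint greedy_rem (y : R) (n : nat) : R :=
  match n with
  | 0 => y
  | n'.+1 => if (2 ^+ n'.+1)^-1 < greedy_rem y n'
             then greedy_rem y n' - (2 ^+ n'.+1)^-1 else greedy_rem y n'
  end.

Definition greedy_digits (y : R) (n : nat) : bool := (2 ^+ n.+1)^-1 < greedy_rem y n.

Lemma greedy_rem_bounds y n : 0 < y <= 1 -> 0 < greedy_rem y n <= (2 ^+ n)^-1.
Proof.
move=> hy; elim: n => [|n IH] /=; first by rewrite expr0 invr1.
have e : (2 ^+ n.+1)^-1 = (2 ^+ n)^-1 / 2 :> R by rewrite exprS invfM mulrC.
by case: ifP => h; rewrite e in h *; lra.
Qed.

Lemma greedy_remE y n : greedy_rem y n = y - series (bin_term R (greedy_digits y)) n.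
Proof.
elim: n => [|n IH] /=; first by rewrite series0 subr0.
by rewrite seriesSr /bin_term /greedy_digits; case: ifP => h; rewrite IH /=; lra.
Qed.

Lemma greedy_digits_val y : 0 < y <= 1 -> inf_val R (greedy_digits y) = y.
Proof.
move=> hy; apply/eqP; rewrite eq_le; apply/andP; split.
  apply: limr_le; first exact: bin_partial_cvg.
  by near=> n; have := greedy_remE y n; have := greedy_rem_bounds n hy; lra.
rewrite leNgt; apply/negP => h.
have [n hn] := @inv_pow2_small R (y - inf_val R (greedy_digits y)) ltac:(lra).
have := inf_val_ge_partial R (greedy_digits y) n.
have := greedy_remE y n; have := greedy_rem_bounds n hy; lra.
Unshelve. all: by end_near.
Qed.

(* A tail of zeros would freeze the positive remainder below every 2^-n. *)
Lemma greedy_digits_nez y : 0 < y <= 1 -> not_ending_in_zeros (greedy_digits y).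
Proof.
move=> hy n; apply: contrapT => hno.
have hz j : greedy_digits y (n + j)%N = false.
  by apply/negP => hj; apply: hno; exists (n + j)%N; split => //; exact: leq_addr.
have hconst j : greedy_rem y (n + j)%N = greedy_rem y n.
  elim: j => [|j IH]; first by rewrite addn0.
  by rewrite addnS /=; move: (hz j); rewrite /greedy_digits => ->.
have [p hp] := inv_pow2_small (proj1 (andP (greedy_rem_bounds n hy))).
have := greedy_rem_bounds (n + p)%N hy; rewrite hconst => /andP [_ h].
have := @inv_pow2_le R p (n + p)%N (leq_addl _ _).
lra.
Qed.

Lemma tilde_spec y : 0 < y <= 1 ->
  inf_val R (tilde y) = y /\ not_ending_in_zeros (tilde y).
Proof.
move=> hy; apply: (@getPex _ (fun w => inf_val R w = y /\ not_ending_in_zeros w)).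
by exists (greedy_digits y); split; [exact: greedy_digits_val | exact: greedy_digits_nez].
Qed.

Lemma tilde_inf_val u : not_ending_in_zeros u -> tilde (inf_val R u) = u.
Proof.
move=> hu; have hp : 0 < inf_val R u <= 1 by rewrite inf_val_gt0 // inf_val_le1.
have [h1 h2] := tilde_spec hp.
exact: (inf_val_inj h2 hu h1).
Qed.

End BinaryExpansion.

Notation lebesgue_outer R := ((@wlength R idfun)^*)%mu.

Section OuterMeasureAffine.
Variable R : realType.
Local Notation mstar := (lebesgue_outer R).

Definition affine_image (c s : R) (A : set R) : set R := [set c + s * x | x in A].

Lemma affine_image_itv (c s a b : R) : 0 < s ->
  affine_image c s `]a, b]%classic = `]c + s * a, c + s * b]%classic.
Proof.
move=> s0; apply/seteqP; split => y.
  case=> x /= hx <-; move: hx; rewrite /= !in_itv /= => /andP [h1 h2].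
  by rewrite ltrD2l lerD2l ltr_pM2l // ler_pM2l // h1 h2.
rewrite /= in_itv /= => /andP [h1 h2]; exists ((y - c) / s).
  rewrite /= in_itv /=; apply/andP; split.
    by rewrite ltr_pdivlMr // ltrBrDl [a * s]mulrC.
  by rewrite ler_pdivrMr // lerBlDl [b * s]mulrC.
by rewrite mulrC divfK ?gt_eqF // addrC subrK.
Qed.

Lemma affine_image_ocitv (c s : R) (X : set (ocitv_type R)) : 0 < s -> ocitv X ->
  ocitv (affine_image c s X) /\
  wlength idfun (affine_image c s X) = (s%:E * wlength idfun X)%E.
Proof.
move=> s0 /ocitvP [->|[[a b] /= ab ->]].
  by rewrite /affine_image image_set0 wlength0 mule0; split => //; exact: ocitv0.
rewrite affine_image_itv //; split; first exact: is_ocitv.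
have hab : c + s * a <= c + s * b by rewrite lerD2l ler_pM2l // ltW.
by rewrite !wlength_itv_bnd ?(ltW ab) //= -EFinM; congr (_%:E); ring.
Qed.

(* Covering A by half-open intervals and mapping the cover gives
   mstar (c + s A) <= s * mstar A. *)
Lemma outer_affine_le (c s : R) (A : set R) : 0 < s ->
  (mstar (affine_image c s A) <= s%:E * mstar A)%E.
Proof.
move=> s0; rewrite /mu_ext -ereal_inf_pZl //; apply: ereal_inf_le_tmp.
move=> _ [_ [F [mF AF] <-] <-].
exists (fun k => affine_image c s (F k)).
  split; first by move=> i; have [h _] := affine_image_ocitv c s0 (mF i).
  move=> _ [x Ax <-]; have [i _ Fix] := AF x Ax.
  by exists i => //; exists x.
rewrite -nneseriesZl; last by move=> i _; exact: wlength_ge0.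
by apply: eq_eseriesr => i _; have [_ h] := affine_image_ocitv c s0 (mF i).
Qed.

Definition translate (t : R) (A : set R) : set R := [set y | A (y - t)].

Lemma translate_affine t A : translate t A = affine_image t 1 A.
Proof.
apply/seteqP; split => y.
  by rewrite /translate /= => h; exists (y - t) => //; rewrite mul1r addrC subrK.
by case=> x Ax <-; rewrite /translate /= mul1r addrAC subrr add0r.
Qed.

Lemma translateK t A : translate (- t) (translate t A) = A.
Proof. by apply/seteqP; split => y; rewrite /translate /= opprK addrK. Qed.

Lemma outer_translate t A : mstar (translate t A) = mstar A.
Proof.
have le_tr u B : (mstar (translate u B) <= mstar B)%E.
  by rewrite translate_affine; have := @outer_affine_le u 1 B ltr01; rewrite mul1e.
by apply/eqP; rewrite eq_le le_tr /= -{1}(translateK t A) le_tr.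
Qed.

Lemma caratheodory_translate t A :
  mstar.-caratheodory A -> mstar.-caratheodory (translate t A).
Proof.
move=> hA X.
have e1 : X `&` translate t A = translate t (translate (- t) X `&` A).
  by apply/seteqP; split => y; rewrite /translate /= opprK subrK.
have e2 : X `&` ~` translate t A = translate t (translate (- t) X `&` ~` A).
  by apply/seteqP; split => y; rewrite /translate /= opprK subrK.
by rewrite e1 e2 !outer_translate -(outer_translate (- t) X); exact: hA.
Qed.

Lemma outer_ocitv (a b : R) : a <= b -> mstar `]a, b]%classic = (b - a)%:E.
Proof.
move=> ab; rewrite (@measurable_mu_extE _ _ _ (@wlength R idfun) `]a, b]%classic).
  exact: wlength_itv_bnd.
exact: is_ocitv.
Qed.

Lemma outer_null_caratheodory (A : set R) : mstar A = 0%E -> mstar.-caratheodory A.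
Proof.
move=> A0; apply: le_caratheodory_measurable => X /=.
have -> : mstar (X `&` A) = 0%E.
  apply/eqP; rewrite eq_le; apply/andP; split; last exact: mu_ext_ge0.
  by rewrite -A0; apply: le_mu_ext; exact: subIsetr.
by rewrite add0e; apply: le_mu_ext; exact: subIsetl.
Qed.

End OuterMeasureAffine.

Section Vitali.
Variable R : realType.
Local Notation mstar := (lebesgue_outer R).

Definition rational (x : R) : Prop := exists q : rat, x = ratr q.

Lemma rationalD x y : rational x -> rational y -> rational (x + y).
Proof. by move=> [p ->] [q ->]; exists (p + q); rewrite rmorphD. Qed.

Lemma rationalB x y : rational x -> rational y -> rational (x - y).
Proof. by move=> [p ->] [q ->]; exists (p - q); rewrite rmorphB. Qed.

Definition vitali_rep (y : R) : R := get (fun z : R => 0 < z <= 1 /\ rational (z - y)).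

Lemma vitali_rep_spec y : 0 < vitali_rep y <= 1 /\ rational (vitali_rep y - y).
Proof.
apply: (@getPex _ (fun z : R => 0 < z <= 1 /\ rational (z - y))).
exists (y - ((Num.ceil y)%:~R - 1)); split.
  by have := ceil_itv y; rewrite intrD /= => /andP [h1 h2]; apply/andP; split; lra.
by exists (- ((Num.ceil y) - 1)%:~R)%R; rewrite rmorphN rmorph_int intrD /=; lra.
Qed.

Lemma vitali_rep_eq y y' : rational (y - y') -> vitali_rep y = vitali_rep y'.
Proof.
move=> h; rewrite /vitali_rep; congr get; apply/funext => z; apply/propext.
split=> -[hz hr]; split => //.
  have -> : z - y' = (z - y) + (y - y') by ring.
  exact: rationalD.
have -> : z - y = (z - y') - (y - y') by ring.
exact: rationalB.
Qed.

Definition vitali_set : set R := range vitali_rep.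

Lemma vitali_set_sub : vitali_set `<=` `]0, 1]%classic.
Proof. by move=> _ [y _ <-]; rewrite /= in_itv /=; have [] := vitali_rep_spec y. Qed.

Lemma vitali_set_rational_eq v v' : vitali_set v -> vitali_set v' ->
  rational (v - v') -> v = v'.
Proof.
have fix_rep u : vitali_set u -> vitali_rep u = u.
  by move=> [y _ <-]; apply: vitali_rep_eq; exact: (vitali_rep_spec y).2.
by move=> hv hv' h; rewrite -(fix_rep _ hv) -(fix_rep _ hv'); apply: vitali_rep_eq.
Qed.

Definition rat_enum (n : nat) : R := ratr (odflt 0 (unpickle n)).

(* The rational translates of the Vitali set cover (0,1], so it is not null. *)
Lemma vitali_outer_gt0 : (0 < mstar vitali_set)%E.
Proof.
rewrite lt_def; apply/andP; split; last exact: mu_ext_ge0.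
apply/eqP => V0.
have cover : `]0, 1]%classic `<=` \bigcup_n translate (rat_enum n) vitali_set.
  move=> y _; have [_ [r hr]] := vitali_rep_spec y.
  exists (pickle (- r)) => //; rewrite /translate /= /rat_enum pickleK /= rmorphN.
  change (vitali_set (y - - ratr r)); rewrite -hr.
  by exists y => //; ring.
pose T n := translate (rat_enum n) vitali_set.
have hcov : (mstar `]0%R, 1%R]%classic <= mstar (\bigcup_n T n))%E by exact: le_mu_ext.
have hsub : (mstar (\bigcup_n T n) <= \sum_(n <oo) mstar (T n))%E.
  exact: mu_ext_sigma_subadditive.
have := le_trans hcov hsub.
rewrite eseries0; last by move=> i _ _; rewrite outer_translate V0.
by rewrite outer_ocitv ?ler01 // subr0 lee_fin; lra.
Qed.

Lemma vitali_outer_le1 : (mstar vitali_set <= 1%:E)%E.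
Proof.
apply: (@le_trans _ _ (mstar `]0%R, 1%R]%classic)).
  by apply: le_mu_ext; exact: vitali_set_sub.
by rewrite outer_ocitv ?ler01 ?subr0.
Qed.

Definition inv_succ (i : nat) : R := (i.+1%:R)^-1.

Lemma inv_succ_rational i : rational (inv_succ i).
Proof. by exists ((i.+1%:R)^-1); rewrite fmorphV /= ratr_nat. Qed.

Lemma inv_succ_inj : injective inv_succ.
Proof. by move=> i j /invr_inj/eqP; rewrite eqr_nat => /eqP []. Qed.

Lemma inv_succ_itv i : 0 < inv_succ i <= 1.
Proof. by rewrite /inv_succ invr_gt0 ltr0Sn /= invf_le1 ?ltr0Sn // -natr1 lerDr. Qed.

Fixpoint vitali_union (n : nat) : set R :=
  if n is n'.+1 then vitali_union n' `|` translate (inv_succ n') vitali_set else set0.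

Lemma vitali_unionP n y :
  vitali_union n y <-> exists2 i, (i < n)%N & vitali_set (y - inv_succ i).
Proof.
elim: n => [|n IH] /=; first by split => // -[].
split.
  case=> [/IH [i hi hv]|hv]; [by exists i => //; exact: ltnW | by exists n].
move=> [i]; rewrite ltnS leq_eqVlt => /orP [/eqP -> hv|hi hv]; first by right.
by left; apply/IH; exists i.
Qed.

Lemma vitali_union_sub n : vitali_union n `<=` `]0, 2]%classic.
Proof.
move=> y /vitali_unionP [i _ /vitali_set_sub]; rewrite /= !in_itv /= => /andP [h1 h2].
by have /andP [h3 h4] := inv_succ_itv i; apply/andP; split; lra.
Qed.

Lemma outer_setU_caratheodory (B C : set R) : mstar.-caratheodory C ->
  B `&` C = set0 -> mstar (B `|` C) = (mstar B + mstar C)%E.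
Proof.
move=> hC hBC; rewrite (hC (B `|` C)) addeC.
have -> : (B `|` C) `&` C = C by rewrite setIUl setIid; apply/setUidr; exact: subIsetr.
have -> : (B `|` C) `&` ~` C = B.
  rewrite setIUl setICr setU0; apply/setIidl => x Bx Cx.
  by have : (B `&` C) x by []; rewrite hBC.
by [].
Qed.

Section MeasurableVitali.
Hypothesis vitali_caratheodory : mstar.-caratheodory vitali_set.

(* The translates in vitali_union n are disjoint, so its outer measure is n mstar V. *)
Lemma outer_vitali_union n : mstar (vitali_union n) = (n%:R%:E * mstar vitali_set)%E.
Proof.
elim: n => [|n IH] /=; first by rewrite mul0e mu_ext0 //; move=> ?; exact: wlength_ge0.
rewrite outer_setU_caratheodory; last 2 first.
- exact: caratheodory_translate.
- apply/seteqP; split => // y [/vitali_unionP [i hi hv] hv'].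
  have hr : rational ((y - inv_succ i) - (y - inv_succ n)).
    have -> : (y - inv_succ i) - (y - inv_succ n) = inv_succ n - inv_succ i by ring.
    exact: rationalB (inv_succ_rational n) (inv_succ_rational i).
  have e : inv_succ i = inv_succ n.
    by apply: oppr_inj; apply: (addrI y); exact: vitali_set_rational_eq hv hv' hr.
  by move: hi; rewrite (inv_succ_inj e) ltnn.
by rewrite IH outer_translate -natr1 EFinD ge0_muleDl ?mul1e ?lee_fin.
Qed.

End MeasurableVitali.

(* Vitali's theorem: n disjoint translates of V fit into (0,2] for every n,
   which forces mstar V = 0, contradicting the covering by rational translates. *)
Lemma vitali_not_caratheodory : ~ mstar.-caratheodory vitali_set.
Proof.
move=> hV; have hpos := vitali_outer_gt0.
have hfin : mstar vitali_set \is a fin_num.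
  by rewrite ge0_fin_numE ?mu_ext_ge0 // (le_lt_trans vitali_outer_le1) ?ltry.
set m := fine (mstar vitali_set); have hm : mstar vitali_set = m%:E by rewrite fineK.
have m0 : 0 < m by rewrite -lte_fin -hm.
set n := Num.bound (2 / m).
have hn : 2 / m < n%:R by apply: archi_boundP; rewrite divr_ge0 // ltW.
have : (mstar (vitali_union n) <= mstar `]0%R, 2%R]%classic)%E.
  by apply: le_mu_ext; exact: vitali_union_sub.
rewrite outer_vitali_union // outer_ocitv ?ler0n // hm -EFinM lee_fin subr0.
by move: hn; rewrite ltr_pdivrMr // => hn; rewrite leNgt hn.
Qed.

End Vitali.

Section SelfSimilarNull.
Variable R : realType.
Local Notation mstar := (lebesgue_outer R).

(* A set of finite outer measure covered by N affine copies of itself with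
   ratio s, where N s < 1, is null: mstar X <= N s mstar X. *)
Lemma outer_self_similar_null (X : set R) (N : nat) (c : nat -> R) (s : R) :
  0 < s -> N%:R * s < 1 -> (mstar X < +oo)%E ->
  X `<=` \big[setU/set0]_(i < N) affine_image (c i) s X -> mstar X = 0%E.
Proof.
move=> s0 Ns1 Xfin cover.
have hfin : mstar X \is a fin_num by rewrite ge0_fin_numE ?mu_ext_ge0.
set m := fine (mstar X); have hm : mstar X = m%:E by rewrite fineK.
have m0 : 0 <= m by rewrite -lee_fin -hm mu_ext_ge0.
have hcov : (mstar X <= mstar (\big[setU/set0]_(i < N) affine_image (c i) s X))%E.
  exact: le_mu_ext.
have hsub : (mstar (\big[setU/set0]_(i < N) affine_image (c i) s X) <=
    \sum_(i < N) mstar (affine_image (c i) s X))%E.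
  exact: (outer_measure_subadditive mstar (fun i => affine_image (c i) s X)).
have hpiece : (\sum_(i < N) mstar (affine_image (c i) s X) <= \sum_(i < N) (s * m)%:E)%E.
  by apply: lee_sum => i _; rewrite EFinM -hm; exact: outer_affine_le.
have := le_trans hcov (le_trans hsub hpiece).
rewrite sumEFin sumr_const card_ord hm lee_fin -mulr_natl => hle.
have -> : m = 0 by nra.
by [].
Qed.

End SelfSimilarNull.

Section OddBlocks.
Variable R : realType.
Local Notation mstar := (lebesgue_outer R).
Variable k : nat.
Variable weps : k.-tuple bool.

Definition odd_blocks_fixed : set (nat -> bool) :=
  [set u | forall i j, (j < k)%N -> u ((2 * i + 1) * k + j)%N = nth false weps j].

Definition odd_blocks_values : set R := [set inf_val R u | u in odd_blocks_fixed].

(* The word f weps 0^oo determined by a first block f. *)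
Definition first_two_blocks (f : {ffun 'I_k -> bool}) (i : nat) : bool :=
  if @insub _ _ 'I_k i is Some j then f j else nth false weps (i - k).

(* The common value of the first 2k letters of words of that shape. *)
Definition first_two_blocks_value (f : {ffun 'I_k -> bool}) : R :=
  series (bin_term R (first_two_blocks f)) (2 * k).

Lemma odd_blocks_fixed_shift u :
  odd_blocks_fixed u -> odd_blocks_fixed (wshift (2 * k) u).
Proof.
move=> hu i j hj; rewrite /wshift.
have -> : ((2 * i + 1) * k + j + 2 * k = (2 * i.+1 + 1) * k + j)%N by nia.
exact: hu.
Qed.

(* Dropping the first two blocks maps the set into itself, so each of its points
   lies in a copy c_f + 2^-2k * odd_blocks_values indexed by the first block f. *)
Lemma odd_blocks_self_similar x : odd_blocks_values x ->
  exists f, affine_image (first_two_blocks_value f) (2 ^+ (2 * k))^-1 odd_blocks_values x.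
Proof.
move=> [u hu <-]; exists [ffun j : 'I_k => u (val j)].
exists (inf_val R (wshift (2 * k) u)).
  by exists (wshift (2 * k) u) => //; exact: odd_blocks_fixed_shift.
rewrite [in RHS](inf_val_split R u (2 * k)) mulrC; congr (_ + _).
apply: (@bin_partial_ext R) => i hi; rewrite /first_two_blocks; case: insubP => [j _ ej|hn].
  by rewrite ffunE ej.
have := hu 0%N (i - k)%N ltac:(move: hn; rewrite -leqNgt; lia).
by rewrite muln0 add0n mul1n subnKC // leqNgt.
Qed.

Lemma odd_blocks_values_sub : odd_blocks_values `<=` `]-1, 1]%classic.
Proof.
move=> _ [u _ <-]; rewrite /= in_itv /= inf_val_le1 andbT.
by apply: lt_le_trans (inf_val_ge0 R u); rewrite ltrN10.
Qed.

Hypothesis k_gt0 : (0 < k)%N.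

(* 2^k copies with ratio 2^-2k: the set of values is Lebesgue null. *)
Lemma odd_blocks_null : mstar odd_blocks_values = 0%E.
Proof.
pose T := {ffun 'I_k -> bool}.
pose c n := if @insub _ _ 'I_#|T| n is Some i then first_two_blocks_value (enum_val i) else 0.
apply: (@outer_self_similar_null _ _ #|T| c (2 ^+ (2 * k))^-1).
- by rewrite invr_gt0 exprn_gt0.
- rewrite card_ffun card_bool card_ord natrX mul2n -addnn exprD invfM mulrA divff ?expf_neq0 //.
  by rewrite mul1r invf_lt1 ?exprn_gt0 // exprn_egt1 ?ltr1n // -lt0n.
- have : (mstar odd_blocks_values <= mstar `](-1)%R, 1%R]%classic)%E.
    by apply: le_mu_ext; exact: odd_blocks_values_sub.
  by move/le_lt_trans; apply; rewrite outer_ocitv ?ltry // lerN10.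
- move=> y /odd_blocks_self_similar [f hf].
  rewrite -(bigcup_mkord _ (fun i => affine_image (c i) _ odd_blocks_values)).
  exists (val (enum_rank f)); first exact: ltn_ord.
  by rewrite /c valK enum_rankK.
Qed.

End OddBlocks.

Section Interleave.
Variable k : nat.
Hypothesis k_gt0 : (0 < k)%N.
Variable sigma : k.-tuple bool -> seq bool.
Variable weps : k.-tuple bool.
Hypothesis Herase : erasing_with sigma weps.

(* The word b_0 weps b_1 weps b_2 weps ... *)
Definition interleave (b : nat -> k.-tuple bool) (j : nat) : bool :=
  if odd (j %/ k) then nth false weps (j %% k)
  else nth false (b ((j %/ k) %/ 2)%N) (j %% k).

Lemma interleave_at (b : nat -> k.-tuple bool) i j : (j < k)%N ->
  interleave b (i * k + j) =
  if odd i then nth false weps j else nth false (b (i %/ 2)%N) j.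
Proof. by move=> hj; rewrite /interleave divnMDl // divn_small // addn0 modnMDl modn_small. Qed.

Lemma block_interleave b i :
  block k (interleave b) i = if odd i then weps else b (i %/ 2)%N.
Proof.
apply: eq_from_tnth => j; rewrite tnth_mktuple interleave_at //.
by case: ifP => _; rewrite (tnth_nth false).
Qed.

Lemma interleave_odd_blocks b : odd_blocks_fixed weps (interleave b).
Proof.
by move=> i j hj; rewrite interleave_at // addn1 /= mul2n odd_double.
Qed.

Lemma tuple_no_true (t : k.-tuple bool) : ~~ has id t -> val t = nseq k false.
Proof.
case: t => s /= /eqP <-.
by elim: s => [|x s IH] //=; rewrite negb_or => /andP [/negbTE -> /IH <-].
Qed.

Section NonErasedBlocks.
Variable b : nat -> k.-tuple bool.
Hypothesis b_nonerased : forall i, sigma (b i) <> [::].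

Definition factor_prefix (m : nat) : seq bool := flatten [seq sigma (b i) | i <- iota 0 m].

Lemma factor_prefixS m : factor_prefix m.+1 = factor_prefix m ++ sigma (b m).
Proof. by rewrite /factor_prefix -addn1 iotaD map_cat flatten_cat /= cats0. Qed.

(* The erased blocks disappear: sigma applied to the first n blocks of the
   interleaved word yields sigma(b_0) ... sigma(b_(ceil(n/2)-1)). *)
Lemma sub_prefix_interleave n :
  sub_prefix sigma (interleave b) n = factor_prefix (n.+1 %/ 2)%N.
Proof.
elim: n => [|n IH] //.
rewrite /sub_prefix -addn1 iotaD map_cat flatten_cat /= cats0.
rewrite -/(sub_prefix sigma (interleave b) n) IH block_interleave.
have e := modn2 n; case: ifP => hn; rewrite hn in e.
  have -> : ((n + 1).+1 %/ 2 = n.+1 %/ 2)%N by lia.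
  have -> : sigma weps = [::] by apply/Herase.
  by rewrite cats0.
have -> : ((n + 1).+1 %/ 2 = (n.+1 %/ 2).+1)%N by lia.
have -> : ((0 + n) %/ 2 = n.+1 %/ 2)%N by lia.
by rewrite factor_prefixS.
Qed.

Lemma size_factor_prefix m : (m <= size (factor_prefix m))%N.
Proof.
elim: m => [|m IH] //; rewrite factor_prefixS size_cat.
have : (0 < size (sigma (b m)))%N by rewrite lt0n size_eq0; apply/eqP; exact: b_nonerased.
lia.
Qed.

(* The interleaved word has infinitely many ones: either weps contains a one,
   or every b_i does (a block without ones would equal weps). *)
Lemma interleave_nez : not_ending_in_zeros (interleave b).
Proof.
move=> n; have [hw|hw] := boolP (has id weps).
  have /(has_nthP false) [j hj wj] := hw; rewrite size_tuple in hj.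
  exists ((2 * n + 1) * k + j)%N; split; first by nia.
  by rewrite interleave_at // addn1 /= mul2n odd_double.
have /(has_nthP false) [j hj wj] : has id (b n).
  apply/negPn/negP => h; case: (@b_nonerased n); apply/Herase; apply: val_inj.
  by rewrite (tuple_no_true h) (tuple_no_true hw).
rewrite size_tuple in hj; exists ((2 * n) * k + j)%N; split; first by nia.
by rewrite interleave_at // mul2n odd_double /= -mul2n mulKn.
Qed.

(* Its first block is b_0, which is not erased, so it is not weps^oo. *)
Lemma interleave_not_power : ~ is_power_of weps (interleave b).
Proof.
move=> hp; case: (@b_nonerased 0); apply/Herase.
have := block_interleave b 0; rewrite /= divn_small // => <-.
apply: eq_from_tnth => j; rewrite tnth_mktuple mul0n add0n hp (tnth_nth false).
by rewrite modn_small.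
Qed.

End NonErasedBlocks.
End Interleave.

Section Preimage.
Variable R : realType.
Variable k : nat.
Hypothesis k_gt0 : (0 < k)%N.
Variable sigma : k.-tuple bool -> seq bool.
Variable weps : k.-tuple bool.
Hypothesis Herase : erasing_with sigma weps.
Hypothesis Hopt : optimal sigma.

Definition factorization (w : nat -> bool) (b : nat -> k.-tuple bool) : Prop :=
  (forall i, sigma (b i) <> [::]) /\
  (forall n, let p := flatten [seq sigma (b i) | i <- iota 0 n] in
             p = [seq w j | j <- iota 0 (size p)]).

Definition factor (y : R) : nat -> k.-tuple bool := get (factorization (tilde y)).

Lemma factor_spec y : factorization (tilde y) (factor y).
Proof. exact: (getPex (Hopt (tilde y))). Qed.

Definition preimage_point (y : R) : R := inf_val R (interleave weps (factor y)).

Lemma preimage_point_odd_blocks y : odd_blocks_values weps (preimage_point y).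
Proof. by exists (interleave weps (factor y)) => //; exact: interleave_odd_blocks. Qed.

(* f_sigma(0.u) = 0.sigma(u) = 0.y~ = y: the prefixes of sigma(u) are prefixes
   of y~ whose lengths tend to infinity. *)
Lemma f_sigma_preimage y : 0 < y <= 1 -> f_sigma sigma weps (preimage_point y) = y.
Proof.
move=> hy; have [hb hp] := factor_spec y.
have nez := interleave_nez k_gt0 Herase hb.
have ht := tilde_inf_val R nez; rewrite -/(preimage_point y) in ht.
rewrite /f_sigma asboolT; last first.
  split; first by rewrite inf_val_gt0 // inf_val_le1.
  by rewrite ht; exact: interleave_not_power.
rewrite ht /sub_val.
have -> : (fun n => fin_val R (sub_prefix sigma (interleave weps (factor y)) n)) =
    (fun n => series (bin_term R (tilde y)) (size (factor_prefix sigma (factor y) (n.+1 %/ 2)))).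
  apply/funext => n; rewrite (sub_prefix_interleave k_gt0 Herase) /factor_prefix.
  by rewrite (hp (n.+1 %/ 2)%N) fin_val_prefix size_map size_iota.
have [hv _] := tilde_spec hy; rewrite -[in RHS]hv.
apply: cvg_lim => //; apply: inf_val_cvg_along => p.
by exists (2 * p)%N => n hn; have := size_factor_prefix k_gt0 hb (n.+1 %/ 2)%N; lia.
Qed.

Lemma image_preimage_points (A : set R) : A `<=` `]0, 1]%classic ->
  f_sigma sigma weps @` (preimage_point @` A) = A.
Proof.
move=> A01; apply/seteqP; split.
  move=> _ [_ [y Ay <-] <-]; have := A01 y Ay; rewrite /= in_itv /= => hy.
  by rewrite f_sigma_preimage.
move=> y Ay; exists (preimage_point y); first by exists y.
by have := A01 y Ay; rewrite /= in_itv /=; exact: f_sigma_preimage.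
Qed.

End Preimage.

Theorem mainTheorem7 (R : realType) (k : nat) (hk : (2 <= k)%N)
  (sigma : k.-tuple bool -> seq bool) (weps : k.-tuple bool)
  (Herase : erasing_with sigma weps)
  (Hweps : weps <> nseq_tuple k true)
  (Hopt : optimal sigma) :
  exists Gamma : set R,
    Gamma `<=` [set x : R | 0 <= x <= 1] /\
    lebesgue_measurable Gamma /\
    completed_lebesgue_measure Gamma = 0%E /\
    ~ lebesgue_measurable (f_sigma sigma weps @` Gamma).
Proof.
have k_gt0 : (0 < k)%N by apply: leq_trans hk.
pose Gamma := preimage_point sigma weps @` (@vitali_set R).
have Gamma_null : lebesgue_outer R Gamma = 0%E.
  apply/eqP; rewrite eq_le; apply/andP; split; last exact: mu_ext_ge0.
  rewrite -(odd_blocks_null R weps k_gt0); apply: le_mu_ext.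
  by move=> _ [y _ <-]; exact: preimage_point_odd_blocks.
exists Gamma; split; first by move=> _ [y _ <-]; rewrite /= inf_val_ge0 inf_val_le1.
split; first exact: outer_null_caratheodory.
split; first exact: Gamma_null.
rewrite image_preimage_points //; [exact: vitali_not_caratheodory | exact: vitali_set_sub].
Qed.
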